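(* Let $(X,f)$ be a dynamical system and $\mathcal{F}$ a Furstenberg family. The following are equivalent: (1) $(X,f)$ is transitive and $\mathcal{F}$-central; (2) $(X,f)$ is $\nabla(\mathcal{F})$-point transitive; (3) $Trans_{\nabla(\mathcal{F})}(X,f)=Trans(X,f)\neq\emptyset$.
   Context: A dynamical system is a pair $(X,f)$ with $X$ a compact metric space and $f:X\to X$ continuous. $\mathbb{N}=\{1,2,\dots\}$. For $U,V\subset X$ and $x\in X$: $N(U,V)=\{n\in\mathbb{N}: U\cap f^{-n}(V)\neq\emptyset\}$ and $N(x,U)=\{n\in\mathbb{N}: f^n(x)\in U\}$. $(X,f)$ is transitive if $N(U,V)\ne\emptyset$ for all non-empty open $U,V$. A point $x$ is a transitive point if its $\omega$-limit set $\omega(x,f)$ equals $X$; $Trans(X,f)$ denotes the set of transitive points. A Furstenberg family is a collection $\mathcal{F}$ of subsets of $\mathbb{N}$ such that $F_1\subset F_2$ and $F_1\in\mathcal{F}$ imply $F_2\in\mathcal{F}$. A point $x$ is an $\mathcal{F}$-transitive point if $N(x,U)\in\mathcal{F}$ for every non-empty open $U\subset X$; $Trans_{\mathcal{F}}(X,f)$ is the set of such points; $(X,f)$ is $\mathcal{F}$-point transitive if this set is non-empty. $(X,f)$ is $\mathcal{F}$-central if $N(U,U)\in\mathcal{F}$ for every non-empty open $U$. For $F\subset\mathbb{N}$, $F-F=\{a-b: a,b\in F,\ a>b\}$, and the reverse difference family is $\nabla(\mathcal{F})=\{F\subset\mathbb{N}: F-F\in\mathcal{F}\}$. *)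

From Stdlib Require Import Reals List.
Open Scope R_scope.
Set Implicit Arguments.

Record MetricSpace := {
  mcarrier :> Type;
  dist : mcarrier -> mcarrier -> R;
  dist_nonneg : forall x y, 0 <= dist x y;
  dist_sym : forall x y, dist x y = dist y x;
  dist_eq0 : forall x y, dist x y = 0 <-> x = y;
  dist_tri : forall x y z, dist x z <= dist x y + dist y z
}.

Section Dyn.
Variable X : MetricSpace.

Definition is_open (U : X -> Prop) : Prop :=
  forall x, U x -> exists e, 0 < e /\ forall y, dist X x y < e -> U y.

Definition nonempty (U : X -> Prop) : Prop := exists x, U x.

Definition mcompact : Prop :=
  forall (I : Type) (U : I -> X -> Prop),
    (forall i, is_open (U i)) -> (forall x, exists i, U i x) ->
    exists l : list I, forall x, exists i, In i l /\ U i x.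

Definition continuous (f : X -> X) : Prop :=
  forall x e, 0 < e -> exists d, 0 < d /\
    forall y, dist X x y < d -> dist X (f x) (f y) < e.

Definition iter (f : X -> X) (n : nat) (x : X) : X := Nat.iter n f x.

Definition hitting (f : X -> X) (U V : X -> Prop) : nat -> Prop :=
  fun n => (1 <= n)%nat /\ exists x, U x /\ V (iter f n x).

Definition visits (f : X -> X) (x : X) (U : X -> Prop) : nat -> Prop :=
  fun n => (1 <= n)%nat /\ U (iter f n x).

Definition transitive (f : X -> X) : Prop :=
  forall U V, is_open U -> nonempty U -> is_open V -> nonempty V ->
    exists n, hitting f U V n.

Definition omega (f : X -> X) (x : X) : X -> Prop :=
  fun y => forall e, 0 < e -> forall N : nat, exists n, (N <= n)%nat /\
    dist X (iter f n x) y < e.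

Definition Trans (f : X -> X) (x : X) : Prop := forall y, omega f x y.

Definition Trans_F (Fam : (nat -> Prop) -> Prop) (f : X -> X) (x : X) : Prop :=
  forall U, is_open U -> nonempty U -> Fam (visits f x U).

Definition F_point_transitive (Fam : (nat -> Prop) -> Prop) (f : X -> X) : Prop :=
  exists x, Trans_F Fam f x.

Definition F_central (Fam : (nat -> Prop) -> Prop) (f : X -> X) : Prop :=
  forall U, is_open U -> nonempty U -> Fam (hitting f U U).
End Dyn.

Definition furstenberg_family (Fam : (nat -> Prop) -> Prop) : Prop :=
  forall F1 F2 : nat -> Prop, (forall n, F1 n -> F2 n) -> Fam F1 -> Fam F2.

(* proper: not the whole power set (equivalently, the empty set is not in it) *)
Definition proper_family (Fam : (nat -> Prop) -> Prop) : Prop :=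
  exists S, ~ Fam S.

Definition diffset (F : nat -> Prop) : nat -> Prop :=
  fun n => exists a b, F a /\ F b /\ (b < a)%nat /\ n = (a - b)%nat.

Definition nabla (Fam : (nat -> Prop) -> Prop) : (nat -> Prop) -> Prop :=
  fun F => Fam (diffset F).

Arguments continuous {X} f.
Arguments transitive {X} f.
Arguments Trans {X} f x.
Arguments Trans_F {X} Fam f x.
Arguments F_point_transitive {X} Fam f.
Arguments F_central {X} Fam f.

From Pilot Require Import Defs.
From Stdlib Require Import Reals List Lra Lia Classical ClassicalEpsilon.

(* The proof rests on four facts about a point x:
   - For every open U, N(x,U) - N(x,U) ⊆ N(U,U) (shift a later visit back
     by an earlier one); hence a ∇F-transitive point makes (X,f) F-central.
   - If x is transitive, conversely N(U,U) ⊆ N(x,U) - N(x,U): for n ∈ N(U,U)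
     the open set U ∩ f^-n U is visited by x.  So transitive points of an
     F-central system are ∇F-transitive.
   - A ∇F-transitive point is transitive: N(x,U) has two elements for every
     non-empty open U (F is proper), and removing finitely many orbit points
     from a ball around y shows that y is visited arbitrarily late.
   - A transitive compact system has a transitive point: a nested sequence
     of closed balls whose n-th ball consists of points whose orbit after
     time n is 1/(n+1)-dense, intersected by compactness.
   A transitive point makes the system transitive, which closes the cycle. *)

Open Scope R_scope.

Section MetricFacts.
Variable X : MetricSpace.
Local Notation dist := (Defs.dist X).

Definition ball (c : X) (r : R) : X -> Prop := fun z => dist c z < r.

Lemma dist_refl (x : X) : dist x x = 0.
Proof. now apply Defs.dist_eq0. Qed.

Lemma ball_center (c : X) (r : R) : 0 < r -> ball c r c.
Proof. intros Hr. unfold ball. now rewrite dist_refl. Qed.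

Lemma is_open_ball (c : X) (r : R) : is_open X (ball c r).
Proof.
  intros z Hz. exists (r - dist c z); split; [unfold ball in Hz; lra|].
  intros y Hy. unfold ball. pose proof (Defs.dist_tri X c z y). lra.
Qed.

Lemma is_open_inter (U V : X -> Prop) :
  is_open X U -> is_open X V -> is_open X (fun z => U z /\ V z).
Proof.
  intros HU HV z [Hu Hv].
  destruct (HU _ Hu) as [e1 [He1 H1]], (HV _ Hv) as [e2 [He2 H2]].
  exists (Rmin e1 e2); split; [now apply Rmin_pos|].
  intros y Hy. pose proof (Rmin_l e1 e2). pose proof (Rmin_r e1 e2).
  split; [apply H1 | apply H2]; lra.
Qed.

Lemma is_open_preimage (g : X -> X) (U : X -> Prop) :
  continuous g -> is_open X U -> is_open X (fun z => U (g z)).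
Proof.
  intros Hg HU z Hz. destruct (HU _ Hz) as [e [He H]].
  destruct (Hg z e He) as [d [Hd Hgd]]. exists d; split; auto.
Qed.

Lemma finite_separation (g : nat -> X) (z : X) (N : nat) :
  exists d, 0 < d /\
    forall n, (n < N)%nat -> g n <> z -> d <= dist z (g n).
Proof.
  induction N as [|N [d [Hd Hsep]]].
  - exists 1; split; [lra | intros; lia].
  - destruct (classic (g N = z)) as [E | E].
    + exists d; split; auto. intros n Hn Hne.
      apply Hsep; auto. assert (n <> N) by (intros ->; contradiction). lia.
    + assert (Hpos : 0 < dist z (g N)).
      { destruct (Rle_lt_or_eq_dec _ _ (Defs.dist_nonneg X z (g N))) as [h | h];
          auto.
        symmetry in h. apply Defs.dist_eq0 in h. congruence. }
      exists (Rmin d (dist z (g N))); split; [now apply Rmin_pos|].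
      intros n Hn Hne. destruct (Nat.eq_dec n N) as [-> | h]; [apply Rmin_r|].
      pose proof (Rmin_l d (dist z (g N))). pose proof (Hsep n ltac:(lia) Hne).
      lra.
Qed.

Lemma is_open_avoid_prefix (g : nat -> X) (y : X) (U : X -> Prop) (N : nat) :
  is_open X U ->
  is_open X (fun z => U z /\ forall n, (n < N)%nat -> g n = z -> z = y).
Proof.
  intros HU z [Uz Hz]. destruct (HU _ Uz) as [e [He HUe]].
  destruct (finite_separation g z N) as [d [Hd Hsep]].
  exists (Rmin e d); split; [now apply Rmin_pos|].
  intros w Hw. pose proof (Rmin_l e d). pose proof (Rmin_r e d).
  split; [apply HUe; lra|].
  intros n Hn Hgw. destruct (classic (g n = z)) as [E | E].
  - rewrite <- Hgw, E. now apply (Hz n).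
  - pose proof (Hsep n Hn E). rewrite Hgw in *. lra.
Qed.

Lemma finite_net (rho : R) :
  mcompact X -> 0 < rho ->
  exists l : list X, forall y, exists c, In c l /\ dist c y < rho.
Proof.
  intros HX Hrho.
  destruct (HX X (fun c => ball c rho) (fun c => is_open_ball c rho))
    as [l Hl]; [intros x; exists x; now apply ball_center|].
  exists l. exact Hl.
Qed.

Lemma nested_closed_balls_meet (c : nat -> X) (r : nat -> R) :
  mcompact X -> (forall n, 0 <= r n) ->
  (forall n z, dist (c (S n)) z <= r (S n) -> dist (c n) z <= r n) ->
  exists z, forall n, dist (c n) z <= r n.
Proof.
  intros HX Hr Hnest.
  assert (Hmono : forall m k z, (m <= k)%nat ->
            dist (c k) z <= r k -> dist (c m) z <= r m).
  { intros m k z Hmk. induction Hmk; auto. }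
  apply NNPP; intros Hno.
  destruct (HX nat (fun m z => r m < dist (c m) z)) as [l Hl].
  - intros m z Hz. exists (dist (c m) z - r m); split; [lra|].
    intros y Hy. pose proof (Defs.dist_tri X (c m) y z).
    rewrite (Defs.dist_sym X y z) in *. lra.
  - intros z. apply NNPP; intros Hz. apply Hno. exists z; intros m.
    apply Rnot_lt_le; intros Hm. apply Hz. now exists m.
  - destruct (Hl (c (list_max l))) as [m [Hm Hfar]].
    assert (Hle : (m <= list_max l)%nat).
    { assert (Hall := proj1 (list_max_le l (list_max l)) (Nat.le_refl _)).
      rewrite Forall_forall in Hall. now apply Hall. }
    pose proof (Hmono m (list_max l) (c (list_max l)) Hle
                  ltac:(rewrite dist_refl; apply Hr)).
    lra.
Qed.

End MetricFacts.

Section Dynamics.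
Variable X : MetricSpace.
Variable f : X -> X.
Local Notation dist := (Defs.dist X).

Lemma iter_add (n m : nat) (x : X) :
  iter X f (n + m) x = iter X f n (iter X f m x).
Proof. unfold iter; induction n; simpl; [reflexivity | now rewrite IHn]. Qed.

Lemma iter_continuous (n : nat) : continuous f -> continuous (iter X f n).
Proof.
  intros Hf. induction n as [|n IH]; intros x e He.
  - exists e; split; auto.
  - destruct (Hf (iter X f n x) e He) as [d1 [Hd1 H1]].
    destruct (IH x d1 Hd1) as [d2 [Hd2 H2]].
    exists d2; split; auto. intros y Hy. now apply H1, H2.
Qed.

Lemma iter_periodic (a b : nat) (x : X) :
  (b < a)%nat -> iter X f a x = iter X f b x ->
  forall k, iter X f (b + k * (a - b)) x = iter X f b x.
Proof.
  intros Hab Hret k. induction k as [|k IH]; [now rewrite Nat.add_0_r|].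
  replace (b + S k * (a - b))%nat with ((a - b) + (b + k * (a - b)))%nat
    by lia.
  rewrite iter_add, IH, <- iter_add.
  now replace (a - b + b)%nat with a by lia.
Qed.

Lemma trans_point_visits_late (x z : X) (W : X -> Prop) :
  Trans f x -> is_open X W -> W z ->
  forall N, exists m, (N <= m)%nat /\ W (iter X f m x).
Proof.
  intros Hx HW Wz N. destruct (HW _ Wz) as [e [He HWe]].
  destruct (Hx z e He N) as [m [Hm Hd]].
  exists m; split; auto. apply HWe. now rewrite Defs.dist_sym.
Qed.

Lemma trans_point_transitive (x : X) : Trans f x -> transitive f.
Proof.
  intros Hx U V HU [u Uu] HV [v Vv].
  destruct (trans_point_visits_late x u U Hx HU Uu 1) as [n [Hn Un]].
  destruct (trans_point_visits_late x v V Hx HV Vv (S n)) as [m [Hm Vm]].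
  exists (m - n)%nat. split; [lia|]. exists (iter X f n x); split; auto.
  rewrite <- iter_add. now replace (m - n + n)%nat with m by lia.
Qed.

Lemma diffset_visits_hitting (x : X) (U : X -> Prop) (n : nat) :
  diffset (visits X f x U) n -> hitting X f U U n.
Proof.
  intros [a [b [[_ Ua] [[_ Ub] [Hab ->]]]]]. split; [lia|].
  exists (iter X f b x); split; auto.
  rewrite <- iter_add. now replace (a - b + b)%nat with a by lia.
Qed.

Lemma hitting_diffset_visits (x : X) (U : X -> Prop) (n : nat) :
  continuous f -> Trans f x -> is_open X U ->
  hitting X f U U n -> diffset (visits X f x U) n.
Proof.
  intros Hf Hx HU [Hn [z [Uz Unz]]].
  assert (HW : is_open X (fun w => U w /\ U (iter X f n w))).
  { apply is_open_inter; auto. apply is_open_preimage; auto.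
    now apply iter_continuous. }
  destruct (trans_point_visits_late x z _ Hx HW (conj Uz Unz) 1)
    as [m [Hm [Um Unm]]].
  exists (n + m)%nat, m. repeat split; auto; try lia.
  now rewrite iter_add.
Qed.

Lemma nabla_point_central (Fam : (nat -> Prop) -> Prop) (x : X) :
  furstenberg_family Fam -> Trans_F (nabla Fam) f x -> F_central Fam f.
Proof.
  intros HF Hx U HU HnU. apply (HF _ _ (diffset_visits_hitting x U)).
  now apply Hx.
Qed.

Lemma central_trans_point_nabla (Fam : (nat -> Prop) -> Prop) (x : X) :
  continuous f -> furstenberg_family Fam -> F_central Fam f -> Trans f x ->
  Trans_F (nabla Fam) f x.
Proof.
  intros Hf HF Hc Hx U HU HnU.
  apply (HF _ _ (fun n => hitting_diffset_visits x U n Hf Hx HU)).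
  now apply Hc.
Qed.

Lemma proper_family_nonempty (Fam : (nat -> Prop) -> Prop) (S : nat -> Prop) :
  proper_family Fam -> furstenberg_family Fam -> Fam S -> exists n, S n.
Proof.
  intros [T HT] HF HS. apply NNPP; intros Hno. apply HT.
  apply (HF S); auto. intros n Sn. exfalso. apply Hno. now exists n.
Qed.

(* If y were not visited after time N, the neighbourhood of y avoiding the
   first N orbit points other than y would be visited twice, both times at y
   itself; the orbit would then be periodic through y. *)
Lemma nabla_point_trans (Fam : (nat -> Prop) -> Prop) (x : X) :
  proper_family Fam -> furstenberg_family Fam ->
  Trans_F (nabla Fam) f x -> Trans f x.
Proof.
  intros Hp HF Hx y e He N. apply NNPP; intros Hno.
  assert (Hfar : forall n, (N <= n)%nat -> ~ dist (iter X f n x) y < e)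
    by (intros n Hn Hd; apply Hno; eauto).
  set (U := fun z => ball X y e z /\
              forall n, (n < N)%nat -> iter X f n x = z -> z = y).
  assert (HU : is_open X U)
    by (apply is_open_avoid_prefix, is_open_ball).
  assert (Uy : U y) by (split; [now apply ball_center | auto]).
  destruct (proper_family_nonempty Fam _ Hp HF (Hx U HU (ex_intro _ y Uy)))
    as [_ [a [b [[_ [Ua1 Ua2]] [[_ [_ Ub2]] [Hab _]]]]]].
  assert (Ha : (a < N)%nat).
  { destruct (Nat.lt_ge_cases a N) as [h | h]; auto. exfalso.
    apply (Hfar a h). unfold ball in Ua1. now rewrite Defs.dist_sym. }
  assert (Ea : iter X f a x = y) by exact (Ua2 a Ha eq_refl).
  assert (Eb : iter X f b x = y) by exact (Ub2 b ltac:(lia) eq_refl).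
  apply (Hfar (b + N * (a - b))%nat); [nia|].
  rewrite (iter_periodic a b x Hab ltac:(congruence) N), Eb, dist_refl.
  exact He.
Qed.

End Dynamics.

Section TransitivePointExists.
Variable X : MetricSpace.
Variable f : X -> X.
Hypothesis f_cont : continuous f.
Hypothesis f_trans : transitive f.
Local Notation dist := (Defs.dist X).

(* Every non-empty open B contains the image, at some time >= N, of every
   point of a suitable non-empty open set: iterate a return time p >= 1 of
   the previous set to itself. *)
Lemma late_return_set (B : X -> Prop) (N : nat) :
  is_open X B -> nonempty X B ->
  exists O, is_open X O /\ nonempty X O /\
    forall w, O w -> exists n, (N <= n)%nat /\ B (iter X f n w).
Proof.
  intros HB HnB. induction N as [|N [O [HO [HnO HOB]]]].
  - exists B; repeat split; auto. intros w Bw. exists 0%nat; split; auto.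
  - destruct (f_trans O O HO HnO HO HnO) as [p [Hp [w [Ow Opw]]]].
    exists (fun w => O w /\ O (iter X f p w)); repeat split.
    + apply is_open_inter; auto. apply is_open_preimage; auto.
      now apply iter_continuous.
    + now exists w.
    + intros w' [_ Opw']. destruct (HOB _ Opw') as [n [Hn Bn]].
      exists (n + p)%nat; split; [lia|]. now rewrite iter_add.
Qed.

Lemma late_hitting_subset (O B : X -> Prop) (N : nat) :
  is_open X O -> nonempty X O -> is_open X B -> nonempty X B ->
  exists O', is_open X O' /\ nonempty X O' /\ (forall w, O' w -> O w) /\
    forall w, O' w -> exists n, (N <= n)%nat /\ B (iter X f n w).
Proof.
  intros HO HnO HB HnB.
  destruct (late_return_set B N HB HnB) as [Q [HQ [HnQ HQB]]].
  destruct (f_trans O Q HO HnO HQ HnQ) as [p [Hp [w [Ow Qpw]]]].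
  exists (fun w => O w /\ Q (iter X f p w)); repeat split.
  - apply is_open_inter; auto. apply is_open_preimage; auto.
    now apply iter_continuous.
  - now exists w.
  - now intros w' [Ow' _].
  - intros w' [_ Qpw']. destruct (HQB _ Qpw') as [n [Hn Bn]].
    exists (n + p)%nat; split; [lia|]. now rewrite iter_add.
Qed.

Lemma late_hitting_list (Bs : list (X -> Prop)) (N : nat) :
  (forall B, In B Bs -> is_open X B /\ nonempty X B) ->
  forall O, is_open X O -> nonempty X O ->
  exists O', is_open X O' /\ nonempty X O' /\ (forall w, O' w -> O w) /\
    forall w, O' w -> forall B, In B Bs ->
      exists n, (N <= n)%nat /\ B (iter X f n w).
Proof.
  induction Bs as [|B Bs IH]; intros HBs O HO HnO.
  - exists O; repeat split; auto. intros w _ B [].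
  - destruct (HBs B (or_introl eq_refl)) as [HB HnB].
    destruct (late_hitting_subset O B N HO HnO HB HnB)
      as [O1 [HO1 [HnO1 [Hsub1 Hhit1]]]].
    destruct (IH (fun B' HB' => HBs B' (or_intror HB')) O1 HO1 HnO1)
      as [O2 [HO2 [HnO2 [Hsub2 Hhit2]]]].
    exists O2; repeat split; auto.
    intros w Ow B' [<- | HB']; [apply Hhit1, Hsub2, Ow | now apply Hhit2].
Qed.

Definition tail_dense (eps : R) (N : nat) (z : X) : Prop :=
  forall y, exists n, (N <= n)%nat /\ dist (iter X f n z) y < eps.

Lemma trans_of_tail_dense (z : X) :
  (forall m, tail_dense (/ INR (S m)) m z) -> Trans f z.
Proof.
  intros Hz y e He N.
  destruct (archimed_cor1 e He) as [K [HK HK0]].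
  destruct (Hz (Nat.max K N) y) as [n [Hn Hd]].
  exists n; split; [lia|].
  assert (/ INR (S (Nat.max K N)) <= / INR K).
  { apply Rinv_le_contravar; [apply lt_0_INR; lia | apply le_INR; lia]. }
  lra.
Qed.

(* Every open ball contains a closed ball of points whose orbit after time
   N is eps-dense: aim at the balls of an eps/2-net. *)
Lemma tail_dense_closed_ball (eps : R) (N : nat) (a : X) (r : R) :
  mcompact X -> 0 < eps -> 0 < r ->
  exists a' r', 0 < r' /\
    (forall z, dist a' z <= r' -> dist a z <= r) /\
    (forall z, dist a' z <= r' -> tail_dense eps N z).
Proof.
  intros HX Heps Hr.
  destruct (finite_net X (eps / 2) HX ltac:(lra)) as [l Hl].
  destruct (late_hitting_list (map (fun c => ball X c (eps / 2)) l) N)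
    with (O := ball X a r) as [O [HO [[a' Oa'] [HsubO HhitO]]]].
  - intros B HB. apply in_map_iff in HB as [c [<- _]].
    split; [apply is_open_ball | exists c; apply ball_center; lra].
  - apply is_open_ball.
  - exists a. now apply ball_center.
  - destruct (HO a' Oa') as [e [He Hball]].
    exists a', (e / 2); repeat split; [lra | |].
    + intros z Hz. left. apply HsubO, Hball. lra.
    + intros z Hz y. destruct (Hl y) as [c [Hc Hcy]].
      destruct (HhitO z ltac:(apply Hball; lra) (ball X c (eps / 2)))
        as [n [Hn Hcn]]; [now apply in_map with (f := fun c => ball X c _)|].
      exists n; split; auto. unfold ball in Hcn.
      pose proof (Defs.dist_tri X (iter X f n z) c y).
      rewrite Defs.dist_sym in Hcn. lra.
Qed.

(* A transitive compact system has a transitive point: the common point of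
   nested closed balls, the (m+1)-st consisting of points whose orbit after
   time m is 1/(m+1)-dense. *)
Lemma trans_point_exists : mcompact X -> inhabited X -> exists x, Trans f x.
Proof.
  intros HX [x0].
  assert (Hstep : forall m (p : X * posreal), exists q : X * posreal,
            (forall z, dist (fst q) z <= snd q -> dist (fst p) z <= snd p) /\
            (forall z, dist (fst q) z <= snd q ->
               tail_dense (/ INR (S m)) m z)).
  { intros m [a r].
    destruct (tail_dense_closed_ball (/ INR (S m)) m a r HX
                ltac:(apply Rinv_0_lt_compat, lt_0_INR; lia) (cond_pos r))
      as [a' [r' [Hr' Hq]]].
    now exists (a', mkposreal r' Hr'). }
  set (next m p := proj1_sig (constructive_indefinite_description _ (Hstep m p))).
  set (balls := fix balls n := match n with
                  | O => (x0, mkposreal 1 Rlt_0_1)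
                  | S k => next k (balls k) end).
  destruct (nested_closed_balls_meet X (fun n => fst (balls n))
              (fun n => pos (snd (balls n))) HX) as [z Hz].
  - intros n. left. apply cond_pos.
  - intros n. exact (proj1 (proj2_sig
      (constructive_indefinite_description _ (Hstep n (balls n))))).
  - exists z. apply trans_of_tail_dense. intros m.
    exact (proj2 (proj2_sig
      (constructive_indefinite_description _ (Hstep m (balls m)))) z (Hz (S m))).
Qed.

End TransitivePointExists.

Theorem proposition3p5 (X : MetricSpace) (f : X -> X)
  (Fam : (nat -> Prop) -> Prop)
  (HX : mcompact X) (Hne : inhabited X) (Hf : continuous f)
  (HF : furstenberg_family Fam) (HFp : proper_family Fam) :
  ((transitive f /\ F_central Fam f) <-> F_point_transitive (nabla Fam) f) /\
  (F_point_transitive (nabla Fam) f <->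
     ((forall x, Trans_F (nabla Fam) f x <-> Trans f x) /\ exists x, Trans f x)).
Proof.
  assert (Hnabla_trans : forall x, Trans_F (nabla Fam) f x -> Trans f x)
    by (intros x; exact (nabla_point_trans X f Fam x HFp HF)).
  assert (Htrans_nabla : F_central Fam f ->
            forall x, Trans f x -> Trans_F (nabla Fam) f x)
    by (intros Hc x; exact (central_trans_point_nabla X f Fam x Hf HF Hc)).
  split; split.
  - intros [Ht Hc]. destruct (trans_point_exists X f Hf Ht HX Hne) as [x Hx].
    exists x. now apply Htrans_nabla.
  - intros [x Hx]. split.
    + now apply (trans_point_transitive X f x), Hnabla_trans.
    + exact (nabla_point_central X f Fam x HF Hx).
  - intros [x0 Hx0].
    pose proof (nabla_point_central X f Fam x0 HF Hx0) as Hc.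
    split; [intros x; split; auto | eauto].
  - intros [Heq [x Hx]]. exists x. now apply Heq.
Qed.
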